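(* If $C\subseteq\mathbb{R}$ is infinite and $C\neq\mathbb{R}$, then there is a two-point selection $f$ on $\mathbb{R}$ such that $C$ is not closed in the topology $\tau_f$.
   Context: A two-point selection on $\mathbb{R}$ is a function $f$ from the set of two-element subsets of $\mathbb{R}$ to $\mathbb{R}$ with $f(F)\in F$. Write $r<_f s$ if $f(\{r,s\})=r$ ($r\ne s$), $(\leftarrow,r)_f=\{x: x<_f r\}$, $(r,\rightarrow)_f=\{x: r<_f x\}$. The topology $\tau_f$ on $\mathbb{R}$ is generated (as a subbase) by all sets $(\leftarrow,r)_f$, $(r,\rightarrow)_f$, $r\in\mathbb{R}$. *)

From Stdlib Require Import Reals List.
Open Scope R_scope.

(* We represent it as a binary function f r s = f({r,s}); its values on the
   diagonal (r = s) are irrelevant and unconstrained. *)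
Definition two_point_selection (f : R -> R -> R) : Prop :=
  forall r s : R, r <> s -> f r s = f s r /\ (f r s = r \/ f r s = s).

Definition sel_lt (f : R -> R -> R) (r s : R) : Prop := r <> s /\ f r s = r.

Definition sel_left_ray (f : R -> R -> R) (r : R) : R -> Prop :=
  fun x => sel_lt f x r.
Definition sel_right_ray (f : R -> R -> R) (r : R) : R -> Prop :=
  fun x => sel_lt f r x.

Definition sel_subbasic (f : R -> R -> R) (p : bool * R) : R -> Prop :=
  if fst p then sel_left_ray f (snd p) else sel_right_ray f (snd p).

Definition sel_basic (f : R -> R -> R) (l : list (bool * R)) : R -> Prop :=
  fun x => forall p, In p l -> sel_subbasic f p x.

(* tau_f-open: the topology generated by the subbase, i.e. unions of finite
   intersections of subbasic sets. *)
Definition tau_open (f : R -> R -> R) (U : R -> Prop) : Prop :=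
  forall x, U x -> exists l : list (bool * R),
    sel_basic f l x /\ (forall y, sel_basic f l y -> U y).

Definition tau_closed (f : R -> R -> R) (C : R -> Prop) : Prop :=
  tau_open f (fun x => ~ C x).

Definition infinite_set (C : R -> Prop) : Prop :=
  ~ (exists l : list R, forall x, C x -> In x l).

From Stdlib Require Import Reals List Classical ClassicalEpsilon FinFun Lia Lra.
Open Scope R_scope.

(* A two-point selection is the same thing as a tournament [lt] on [R]: [f]
   picks [x] from [{x, y}] exactly when [lt x y]. Choose [p] outside [C] and an
   injective sequence [s] in [C]; make [p] the largest point, the terms of [s]
   larger than every other point of [R \ {p}], and order them by index. Since
   [p] is largest, no ray [(<-, r)] contains it, so a basic neighbourhood of
   [p] is an intersection of finitely many rays [(r, ->)], and a term of [s]
   of large enough index lies in all of them: [p] is in the closure of [C]. *)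

Definition tournament {T : Type} (lt : T -> T -> Prop) : Prop :=
  (forall x y, lt x y -> ~ lt y x) /\ (forall x y, x <> y -> lt x y \/ lt y x).

Definition selection_of (lt : R -> R -> Prop) (x y : R) : R :=
  if excluded_middle_informative (lt x y) then x else y.

Lemma sel_lt_selection_of (lt : R -> R -> Prop) (x y : R) :
  sel_lt (selection_of lt) x y <-> x <> y /\ lt x y.
Proof.
  unfold sel_lt, selection_of.
  destruct (excluded_middle_informative (lt x y)); firstorder congruence.
Qed.

Lemma selection_of_two_point (lt : R -> R -> Prop) :
  tournament lt -> two_point_selection (selection_of lt).
Proof.
  intros [Hasym Htot] r s Hrs. unfold selection_of.
  destruct (excluded_middle_informative (lt r s)) as [H1|H1];
  destruct (excluded_middle_informative (lt s r)) as [H2|H2].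
  - exfalso; exact (Hasym _ _ H1 H2).
  - auto.
  - auto.
  - exfalso; destruct (Htot r s Hrs); tauto.
Qed.

Lemma tournament_Rlt : tournament Rlt.
Proof.
  split; intros x y; [lra|]. intros Hxy. destruct (Rtotal_order x y) as [|[|]]; tauto.
Qed.

Definition top_at {T : Type} (p : T) (lt : T -> T -> Prop) (x y : T) : Prop :=
  x <> p /\ (y = p \/ y <> p /\ lt x y).

Lemma tournament_top_at {T : Type} (p : T) (lt : T -> T -> Prop) :
  tournament lt -> tournament (top_at p lt).
Proof.
  intros [Hasym Htot]. unfold top_at. split.
  - intros x y [Hx [Hy|[Hy Hxy]]] [Hy' [Hx'|[_ Hyx]]]; try congruence.
    exact (Hasym _ _ Hxy Hyx).
  - intros x y Hxy.
    destruct (classic (x = p)) as [->|Hx]; [right; auto|].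
    destruct (classic (y = p)) as [->|Hy]; [left; auto|].
    destruct (Htot x y Hxy); tauto.
Qed.

Definition seq_above {T : Type} (s : nat -> T) (x y : T) : Prop :=
  exists m, y = s m /\ forall n, x = s n -> (n < m)%nat.

Definition seq_on_top {T : Type} (s : nat -> T) (lt : T -> T -> Prop) (x y : T) :
  Prop :=
  seq_above s x y \/
  (~ (exists n, x = s n) /\ ~ (exists n, y = s n) /\ lt x y).

Lemma tournament_seq_on_top {T : Type} (s : nat -> T) (lt : T -> T -> Prop) :
  Injective s -> tournament lt -> tournament (seq_on_top s lt).
Proof.
  intros Hs [Hasym Htot]. unfold seq_on_top, seq_above. split.
  - intros x y [[m [-> Hm]]|[Hx [Hy Hxy]]] [[n [-> Hn]]|[Hy' [Hx' Hyx]]].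
    + specialize (Hm n eq_refl). specialize (Hn m eq_refl). lia.
    + apply Hy'; eauto.
    + apply Hx; eauto.
    + exact (Hasym _ _ Hxy Hyx).
  - intros x y Hxy.
    destruct (classic (exists n, x = s n)) as [[n ->]|Hx];
    destruct (classic (exists m, y = s m)) as [[m ->]|Hy].
    + destruct (Nat.lt_total n m) as [Hnm|[->|Hmn]]; [| now exfalso |].
      * left; left; exists m; split; auto. intros k Hk%Hs; lia.
      * right; left; exists n; split; auto. intros k Hk%Hs; lia.
    + right; left; exists n; split; auto. intros k Hk; exfalso; eauto.
    + left; left; exists m; split; auto. intros k Hk; exfalso; eauto.
    + destruct (Htot x y Hxy); tauto.
Qed.

Lemma injective_index_bound {T : Type} (s : nat -> T) :
  Injective s -> forall l : list T, exists N, forall k, In (s k) l -> (k < N)%nat.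
Proof.
  intros Hs l. induction l as [|a l [N HN]].
  - exists O. intros k [].
  - destruct (classic (exists m, a = s m)) as [[m ->]|Ha].
    + exists (Nat.max N (S m)). intros k [Hk%Hs|Hk]; [|specialize (HN k Hk)]; lia.
    + exists N. intros k [Hk|Hk]; [exfalso; eauto|auto].
Qed.

Lemma seq_on_top_cofinal {T : Type} (s : nat -> T) (lt : T -> T -> Prop) :
  Injective s -> forall l : list T, exists N,
    forall x, In x l -> x <> s N /\ seq_on_top s lt x (s N).
Proof.
  intros Hs l. destruct (injective_index_bound s Hs l) as [N HN].
  exists N. intros x Hx.
  split.
  - intros ->. specialize (HN N Hx). lia.
  - left. exists N. split; auto. intros n ->. auto.
Qed.

Fixpoint fresh_prefix {T : Type} (g : list T -> T) (n : nat) : list T :=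
  match n with
  | O => nil
  | S k => g (fresh_prefix g k) :: fresh_prefix g k
  end.

Lemma fresh_prefix_injective {T : Type} (g : list T -> T) :
  (forall l, ~ In (g l) l) -> Injective (fun n => g (fresh_prefix g n)).
Proof.
  intros Hg.
  assert (Hin : forall n m, (m < n)%nat -> In (g (fresh_prefix g m)) (fresh_prefix g n)).
  { induction n as [|n IH]; intros m Hm; [lia|]. simpl.
    destruct (Nat.eq_dec m n) as [->|]; [now left|right; apply IH; lia]. }
  intros n m E. destruct (Nat.lt_total n m) as [H|[H|H]]; auto; exfalso.
  - apply (Hg (fresh_prefix g m)). rewrite <- E. now apply Hin.
  - apply (Hg (fresh_prefix g n)). rewrite E. now apply Hin.
Qed.

Lemma infinite_set_injective_seq (C : R -> Prop) :
  infinite_set C -> exists s : nat -> R, Injective s /\ forall n, C (s n).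
Proof.
  intros HC.
  assert (Hfresh : forall l : list R, exists x, C x /\ ~ In x l).
  { intros l. apply NNPP. intros H. apply HC. exists l. intros x Cx.
    apply NNPP. intros Hx. apply H. eauto. }
  destruct (choice _ Hfresh) as [g Hg].
  exists (fun n => g (fresh_prefix g n)). split.
  - apply fresh_prefix_injective. intros l. apply Hg.
  - intros n. apply Hg.
Qed.

Lemma sel_lt_asym (f : R -> R -> R) (x y : R) :
  two_point_selection f -> sel_lt f x y -> ~ sel_lt f y x.
Proof.
  intros Hf [Hxy Ex] [_ Ey]. destruct (Hf x y Hxy) as [Hsym _]. congruence.
Qed.

Lemma not_tau_closed_of_cofinal_top (f : R -> R -> R) (C : R -> Prop) (p : R) :
  two_point_selection f -> ~ C p ->
  (forall x, x <> p -> sel_lt f x p) ->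
  (forall l : list R, exists c, C c /\ forall r, In r l -> r <> p -> sel_lt f r c) ->
  ~ tau_closed f C.
Proof.
  intros Hf Hp Htop Hcof Hclosed.
  destruct (Hclosed p Hp) as [l [Hpl Hl]].
  destruct (Hcof (map snd l)) as [c [Hc Hcl]].
  apply (Hl c); auto.
  intros [b r] Hbr. specialize (Hpl _ Hbr).
  unfold sel_subbasic, sel_left_ray, sel_right_ray in *; simpl in *.
  destruct b.
  - exfalso. exact (sel_lt_asym f p r Hf Hpl (Htop r (not_eq_sym (proj1 Hpl)))).
  - apply Hcl; [exact (in_map snd _ _ Hbr)|]. exact (proj1 Hpl).
Qed.

Theorem theorem3p14 (C : R -> Prop) :
  infinite_set C -> (exists x : R, ~ C x) ->
  exists f : R -> R -> R, two_point_selection f /\ ~ tau_closed f C.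
Proof.
  intros HC [p Hp].
  destruct (infinite_set_injective_seq C HC) as [s [Hs HsC]].
  set (lt := top_at p (seq_on_top s Rlt)).
  assert (Hlt : tournament lt).
  { apply tournament_top_at, tournament_seq_on_top; auto using tournament_Rlt. }
  assert (Hsel : two_point_selection (selection_of lt))
    by now apply selection_of_two_point.
  exists (selection_of lt). split; [exact Hsel|].
  apply (not_tau_closed_of_cofinal_top _ _ p Hsel Hp).
  - intros x Hx. apply sel_lt_selection_of. unfold lt, top_at. tauto.
  - intros l. destruct (seq_on_top_cofinal s Rlt Hs l) as [N HN].
    exists (s N). split; auto.
    intros r Hr Hrp. apply sel_lt_selection_of. destruct (HN r Hr) as [HrN Hord].
    assert (s N <> p) by (intros E; apply Hp; rewrite <- E; auto).
    unfold lt, top_at. tauto.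
Qed.
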